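(* Let $n\ge1$ and let $J\in\mathbb{R}^{2n\times 2n}$ be partitioned as $J=\begin{bmatrix}A & B\\ C & D\end{bmatrix}$ with $A,B,C,D\in\mathbb{R}^{n\times n}$. Assume (Assumption 1) that $J$ is nonsingular and $A$ is positive definite (i.e., $x^TAx>0$ for all $x\ne0$). Write $J^{-1}=\begin{bmatrix} S^\theta_p & S^\theta_q\\ S^v_p & S^v_q\end{bmatrix}$ with $n\times n$ blocks and $\tilde S=[S^v_p\ \ S^v_q]\in\mathbb{R}^{n\times 2n}$. Let $\alpha\in(0,1)^n$ and $K=\operatorname{diag}(k_1,\dots,k_n)$ with $k_i=\pm\frac{1}{\alpha_i}\sqrt{1-\alpha_i^2}$ (fixed signs), let $k_{\max}=\max_i k_i$, $k_{\min}=\min_i k_i$, $\Delta k=k_{\max}-k_{\min}$, and let $M=k_{\max}A-C$, assumed invertible. Suppose (Assumption 2) $$\Delta k < \|M^{-1}\|_2^{-1}\,\|A\|_2^{-1}$$ (which implies $\|M^{-1}\|_2\,\Delta k\,\|A\|_2<1$). Then $S_\dagger := S^v_p + S^v_q K$ is invertible; consequently, for every $\Delta v\in\mathbb{R}^n$ there exists a unique $\Delta p\in\mathbb{R}^n$ such that, with $\Delta q = K\Delta p$ and $\Delta x=[\Delta p^T,\Delta q^T]^T\in\mathbb{R}^{2n}$, one has $\Delta v=\tilde S\,\Delta x$ (i.e., $\Delta x$ is the unique solution of $\Delta v=\tilde S\Delta x$ within the subspace $\{[\Delta p^T,(K\Delta p)^T]^T:\Delta p\in\mathbb{R}^n\}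$).
   Context: $J$ is the Newton–Raphson power flow Jacobian relating $[\Delta p;\Delta q]=J[\Delta\theta;\Delta v]$, with blocks $A=\partial p/\partial\theta$, $B=\partial p/\partial v$, $C=\partial q/\partial\theta$, $D=\partial q/\partial v$; $\Delta p,\Delta q,\Delta\theta,\Delta v\in\mathbb{R}^n$ are perturbations of active power, reactive power, voltage angle and voltage magnitude at the $n$ PQ buses. $\alpha_i$ are the bus power factors $p_i/\sqrt{p_i^2+q_i^2}$. $\|\cdot\|_2$ is the spectral norm (largest singular value). *)

From HB Require Import structures.
From mathcomp Require Import all_boot all_order all_algebra.
From mathcomp Require Import all_classical all_reals.
Set Implicit Arguments. Unset Strict Implicit. Unset Printing Implicit Defensive.
Import Order.TTheory GRing.Theory Num.Theory.
Local Open Scope ring_scope.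
Local Open Scope classical_set_scope.

Definition vnorm (R : realType) (n : nat) (x : 'cV[R]_n) : R :=
  Num.sqrt (\sum_(i < n) x i 0 ^+ 2).

Definition specnorm (R : realType) (m n : nat) (A : 'M[R]_(m, n)) : R :=
  sup [set vnorm (A *m x) | x in [set x : 'cV[R]_n | vnorm x = 1]].

Definition posdef (R : realType) (n : nat) (A : 'M[R]_n) : Prop :=
  forall x : 'cV[R]_n, x != 0 -> 0 < (x^T *m A *m x) 0 0.

From HB Require Import structures.
From mathcomp Require Import all_boot all_order all_algebra.
From mathcomp Require Import all_classical all_reals.
Import Order.TTheory GRing.Theory Num.Theory.
Local Open Scope ring_scope.
From mathcomp Require Import lra.

Set Implicit Arguments. Unset Strict Implicit.

(* Write J^-1 = [Stheta; St] by row blocks.  If S y = 0 for some y, then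
   w = [y; K y] satisfies St w = S y = 0, hence w = J [z; 0] with
   z = Stheta w, i.e. A z = y and C z = K y = K A z.  Writing
   K = kmax I - (kmax I - K) this says  M z = (kmax I - K) A z  with
   M = kmax A - C, so  z = M^-1 (kmax I - K) A z.  The diagonal matrix
   kmax I - K has entries in [0, dk], so taking Euclidean norms gives
   |z| <= ||M^-1|| dk ||A|| |z|, and Assumption 2 makes the factor < 1;
   thus z = 0, y = A z = 0.  A square matrix with trivial kernel is
   invertible, and the unique solution of dv = St [dp; K dp] is
   dp = S^-1 dv. *)

Section Norms.
Variable R : realType.

Lemma vnorm_ge0 n (x : 'cV[R]_n) : 0 <= vnorm x.
Proof. exact: sqrtr_ge0. Qed.

Lemma vnorm0 n : vnorm (0 : 'cV[R]_n) = 0.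
Proof. by rewrite /vnorm big1 ?sqrtr0 // => i _; rewrite mxE expr0n. Qed.

Lemma vnorm_gt0 n (x : 'cV[R]_n) : x != 0 -> 0 < vnorm x.
Proof.
move=> x0; rewrite /vnorm sqrtr_gt0 lt_def sumr_ge0 ?andbT; last first.
  by move=> i _; exact: sqr_ge0.
apply: contra x0 => /eqP /psumr_eq0P x2_0; apply/eqP/matrixP => i j.
rewrite (ord1 j) mxE; apply/eqP; rewrite -sqrf_eq0; apply/eqP/x2_0 => // ? _.
exact: sqr_ge0.
Qed.

Lemma vnormZ n c (x : 'cV[R]_n) : vnorm (c *: x) = `|c| * vnorm x.
Proof.
rewrite /vnorm (eq_bigr (fun i => c ^+ 2 * x i 0 ^+ 2)); last first.
  by move=> i _; rewrite mxE exprMn.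
by rewrite -mulr_sumr sqrtrM ?sqr_ge0 // sqrtr_sqr.
Qed.

Lemma vnorm1_coord n (x : 'cV[R]_n) j : vnorm x = 1 -> `|x j 0| <= 1.
Proof.
move=> x1.
have sum1 : \sum_(i < n) x i 0 ^+ 2 = 1.
  rewrite -[RHS](expr1n _ 2) -x1 /vnorm sqr_sqrtr //.
  by apply: sumr_ge0 => i _; exact: sqr_ge0.
have : x j 0 ^+ 2 <= 1.
  by rewrite -sum1 (bigD1 j) //= lerDl sumr_ge0 // => i _; exact: sqr_ge0.
by rewrite -real_normK ?num_real // expr_le1.
Qed.

Lemma vnorm_diag_le n (d : 'rV[R]_n) (x : 'cV[R]_n) (c : R) :
  0 <= c -> (forall i, `|d 0 i| <= c) -> vnorm (diag_mx d *m x) <= c * vnorm x.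
Proof.
move=> c0 dc; rewrite /vnorm -[c in X in _ <= X]ger0_norm // -sqrtr_sqr.
rewrite -sqrtrM ?sqr_ge0 // ler_sqrt; last first.
  by rewrite mulr_ge0 ?sqr_ge0 // sumr_ge0 // => i _; exact: sqr_ge0.
rewrite mulr_sumr ler_sum // => i _; rewrite mul_diag_mx mxE exprMn.
rewrite ler_wpM2r ?sqr_ge0 // -(real_normK (num_real (d 0 i))).
by rewrite lerXn2r ?nnegrE ?dc.
Qed.

(* The set defining the spectral norm is bounded (by the Frobenius-type
   bound sqrt (sum_i (sum_j |A i j|)^2)), so its supremum is meaningful. *)
Lemma specnorm_bounded m n (A : 'M[R]_(m, n)) :
  has_ubound [set vnorm (A *m x) | x in [set x : 'cV[R]_n | vnorm x = 1]].
Proof.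
exists (Num.sqrt (\sum_(i < m) (\sum_(j < n) `|A i j|) ^+ 2)).
move=> _ [x /= x1 <-]; rewrite /vnorm ler_sqrt; last first.
  by apply: sumr_ge0 => i _; exact: sqr_ge0.
apply: ler_sum => i _.
rewrite -real_normK ?num_real // lerXn2r // ?nnegrE ?sumr_ge0 //.
rewrite mxE (le_trans (ler_norm_sum _ _ _)) // ler_sum // => j _.
by rewrite normrM ler_piMr // vnorm1_coord.
Qed.

Lemma specnorm_ub m n (A : 'M[R]_(m, n)) (u : 'cV[R]_n) :
  vnorm u = 1 -> vnorm (A *m u) <= specnorm A.
Proof. by move=> u1; rewrite /specnorm; apply: ub_le_sup (specnorm_bounded A) _ _; exists u. Qed.

Lemma specnorm_ge0 m n (A : 'M[R]_(m, n)) : (0 < n)%N -> 0 <= specnorm A.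
Proof.
move=> n_gt0; pose u : 'cV[R]_n := delta_mx (Ordinal n_gt0) 0.
have u1 : vnorm u = 1.
  rewrite /vnorm (bigD1 (Ordinal n_gt0)) //= big1 ?addr0.
    by rewrite !mxE !eqxx expr1n sqrtr1.
  by move=> i /negbTE iN; rewrite mxE iN expr0n.
exact: le_trans (vnorm_ge0 _) (specnorm_ub A u1).
Qed.

Lemma specnormP m n (A : 'M[R]_(m, n)) (x : 'cV[R]_n) :
  (0 < n)%N -> vnorm (A *m x) <= specnorm A * vnorm x.
Proof.
move=> n_gt0; have [->|x0] := eqVneq x 0.
  by rewrite mulmx0 !vnorm0 mulr0.
have xpos := vnorm_gt0 x0.
pose u := (vnorm x)^-1 *: x.
have u1 : vnorm u = 1.
  by rewrite vnormZ ger0_norm ?invr_ge0 ?ltW // mulVf // gt_eqF.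
have xE : x = vnorm x *: u by rewrite /u scalerA mulfV ?gt_eqF // scale1r.
rewrite {1}xE -scalemxAr vnormZ (ger0_norm (ltW xpos)) mulrC ler_pM2r //.
exact: specnorm_ub.
Qed.

End Norms.

Section Kernel.
Variable R : realType.

Lemma lower_inverse_kernel m n (J : 'M[R]_(m + n)) (w : 'cV[R]_(m + n)) :
  J \in unitmx -> dsubmx (invmx J) *m w = 0 ->
  w = J *m col_mx (usubmx (invmx J) *m w) 0.
Proof.
move=> Junit low0; rewrite -low0 -mul_col_mx vsubmxK mulmxA.
by rewrite mulmxV // mul1mx.
Qed.

Lemma unitmx_of_kernel n (S : 'M[R]_n) :
  (forall y : 'cV[R]_n, S *m y = 0 -> y = 0) -> S \in unitmx.
Proof.
move=> ker0; apply: contraT; rewrite unitmxE unitfE negbK -det_tr.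
case/det0P => u u0 uS0.
have : S *m u^T = 0 by rewrite -[S *m _]trmxK trmx_mul trmxK uS0 trmx0.
by move/ker0/eqP; rewrite trmx_eq0 (negbTE u0).
Qed.

Lemma perturbed_kernel_trivial n (A C : 'M[R]_n) (k : 'rV[R]_n) kmax dk
    (z : 'cV[R]_n) :
  (0 < n)%N ->
  (forall i, 0 <= kmax - k 0 i <= dk) ->
  (kmax *: A - C) \in unitmx ->
  specnorm (invmx (kmax *: A - C)) * dk * specnorm A < 1 ->
  C *m z = diag_mx k *m (A *m z) -> z = 0.
Proof.
move=> n_gt0 krange Munit small Cz.
pose d : 'rV[R]_n := \row_i (kmax - k 0 i).
have Mz : (kmax *: A - C) *m z = diag_mx d *m (A *m z).
  rewrite mulmxBl -scalemxAl Cz; apply/matrixP => i j.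
  by rewrite (ord1 j) !mul_diag_mx !mxE mulrBl.
have zE : z = invmx (kmax *: A - C) *m (diag_mx d *m (A *m z)).
  by rewrite -Mz mulKmx.
have dk0 : 0 <= dk by case/andP: (krange (Ordinal n_gt0)) => /le_trans; apply.
have zle : vnorm z <= specnorm (invmx (kmax *: A - C)) * dk * specnorm A
                      * vnorm z.
  rewrite {1}zE; apply: (le_trans (specnormP _ _ n_gt0)).
  rewrite -!mulrA ler_wpM2l ?specnorm_ge0 //.
  apply: le_trans (vnorm_diag_le _ dk0 _) _.
    by move=> i; rewrite mxE ger0_norm; case/andP: (krange i).
  by rewrite ler_wpM2l // specnormP.
apply/eqP; apply: contraT => z0.
by rewrite -(gtr_pMl _ (vnorm_gt0 z0)) ltNge zle in small.
Qed.

Lemma assumption2_contraction (sM dk sA : R) :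
  0 <= sM -> 0 <= sA -> 0 <= dk -> dk < sM^-1 * sA^-1 -> sM * dk * sA < 1.
Proof.
move=> sM0 sA0 dk0 hdk.
have [sM00|sMpos] := eqVneq sM 0; first by move: hdk; rewrite sM00 invr0 mul0r; lra.
have [sA00|sApos] := eqVneq sA 0; first by move: hdk; rewrite sA00 invr0 mulr0; lra.
have sMp : 0 < sM by rewrite lt_def sMpos.
have sAp : 0 < sA by rewrite lt_def sApos.
rewrite -invfM -[(_)^-1]mul1r ltr_pdivlMr ?mulr_gt0 // in hdk.
by rewrite mulrAC mulrC.
Qed.

End Kernel.

Theorem theorem1 (R : realType) (n : nat) (hn : (0 < n)%N)
    (A B C D : 'M[R]_n)
    (alpha : 'I_n -> R) (s : 'I_n -> bool) :
  (* Assumption 1 *)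
  block_mx A B C D \in unitmx ->
  posdef A ->
  (forall i, 0 < alpha i < 1) ->
  let k := fun i : 'I_n =>
    (-1) ^+ s i * (Num.sqrt (1 - alpha i ^+ 2) / alpha i) in
  let kmax := \big[Num.max/k (Ordinal hn)]_(i < n) k i in
  let kmin := \big[Num.min/k (Ordinal hn)]_(i < n) k i in
  let dk := kmax - kmin in
  let K := diag_mx (\row_i k i) in
  let M := kmax *: A - C in
  M \in unitmx ->
  (* Assumption 2 *)
  dk < (specnorm (invmx M))^-1 * (specnorm A)^-1 ->
  let Jinv := invmx (block_mx A B C D) in
  let Svp := dlsubmx Jinv in
  let Svq := drsubmx Jinv in
  let St := dsubmx Jinv in
  (Svp + Svq *m K) \in unitmx /\
  (forall dv : 'cV[R]_n,
     exists! dp : 'cV[R]_n, dv = St *m col_mx dp (K *m dp)).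
Proof.
move=> Junit _ _ k kmax kmin dk K M Munit hdk Jinv Svp Svq St.
have krange i : 0 <= kmax - (\row_i k i) 0 i <= dk.
  rewrite mxE subr_ge0 le_bigmax lerD2l lerN2 /=; exact: bigmin_le.
have dk0 : 0 <= dk by case/andP: (krange (Ordinal hn)) => /le_trans; apply.
have small : specnorm (invmx M) * dk * specnorm A < 1.
  by apply: assumption2_contraction; rewrite ?specnorm_ge0.
have StE (y : 'cV[R]_n) : St *m col_mx y (K *m y) = (Svp + Svq *m K) *m y.
  by rewrite /St -[dsubmx Jinv]hsubmxK mul_row_col mulmxDl mulmxA.
have Sunit : (Svp + Svq *m K) \in unitmx.
  apply: unitmx_of_kernel => y Sy0.
  pose z := usubmx Jinv *m col_mx y (K *m y).
  have wE : col_mx y (K *m y) = block_mx A B C D *m col_mx z 0.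
    by apply: lower_inverse_kernel => //; rewrite StE.
  rewrite mul_block_col !mulmx0 !addr0 in wE; case/eq_col_mx: wE => Az Cz.
  have z0 : z = 0.
    by apply: (perturbed_kernel_trivial hn krange Munit small); rewrite -Cz -Az.
  by rewrite Az z0 mulmx0.
split => // dv; exists (invmx (Svp + Svq *m K) *m dv); split.
  by rewrite StE mulKVmx.
by move=> y ->; rewrite StE mulKmx.
Qed.
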